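(* Let $L$ be an $R_0$-algebra, $k\in[0,1)$, and $F$ a fated filter of $L$. Let $t_1\in[\tfrac{1-k}{2},1]$ and $t_2\in(0,\tfrac{1-k}{2})$, and define $\mu:L\to[0,1]$ by $\mu(x)=t_1$ if $x\in F$ and $\mu(x)=t_2$ otherwise. Then $\mu$ is an $(\in,\in\vee q_k)$-fuzzy fated filter of $L$.
   Context: An $R_0$-algebra is a bounded distributive lattice $(L,\wedge,\vee,0,1)$ with an order-reversing involution $\neg$ and a binary operation $\to$ such that for all $x,y,z\in L$: $x\to y=\neg y\to\neg x$; $1\to x=x$; $(y\to z)\wedge((x\to y)\to(x\to z))=y\to z$; $x\to(y\to z)=y\to(x\to z)$; $x\to(y\vee z)=(x\to y)\vee(x\to z)$; $(x\to y)\vee((x\to y)\to(\neg x\vee y))=1$. A fated filter of $L$ is a nonempty subset $A\subseteq L$ with $1\in A$ such that for all $x,y\in L$ and $a\in A$, $a\to((x\to y)\to x)\in A$ implies $x\in A$. For $x\in L$, $t\in(0,1]$ and a fuzzy subset $\mu$: $x_t\in\mu$ iff $\mu(x)\ge t$; $x_t\,q_k\,\mu$ iff $\mu(x)+t+k>1$; $x_t\in\vee q_k\,\mu$ iff $x_t\in\mu$ or $x_t\,q_k\,\mu$. $\mu$ is an $(\in,\in\vee q_k)$-fuzzy fated filter of $L$ if (1) for all $x\in L$, $t\in(0,1]$: $x_t\in\mu\Rightarrow 1_t\in\vee q_k\,\mu$; and (2) for all $x,a,y\in L$, $t,s\in(0,1]$: if $(a\to((x\to y)\to x))_t\in\mu$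 and $a_s\in\mu$ then $x_{\min\{t,s\}}\in\vee q_k\,\mu$. *)

From Stdlib Require Import Reals.
Open Scope R_scope.

Record R0_algebra := {
  car :> Type;
  meet : car -> car -> car;
  join : car -> car -> car;
  bot : car;
  top : car;
  neg : car -> car;
  imp : car -> car -> car;
  meetC : forall x y, meet x y = meet y x;
  joinC : forall x y, join x y = join y x;
  meetA : forall x y z, meet x (meet y z) = meet (meet x y) z;
  joinA : forall x y z, join x (join y z) = join (join x y) z;
  meet_join_absorb : forall x y, meet x (join x y) = x;
  join_meet_absorb : forall x y, join x (meet x y) = x;
  meet_joinDr : forall x y z, meet x (join y z) = join (meet x y) (meet x z);
  meet_bot : forall x, meet bot x = bot;
  meet_top : forall x, meet top x = x;
  (* order-reversing involution (x <= y iff meet x y = x) *)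
  negK : forall x, neg (neg x) = x;
  neg_antitone : forall x y, meet x y = x -> meet (neg y) (neg x) = neg y;
  r0_1 : forall x y, imp x y = imp (neg y) (neg x);
  r0_2 : forall x, imp top x = x;
  r0_3 : forall x y z, meet (imp y z) (imp (imp x y) (imp x z)) = imp y z;
  r0_4 : forall x y z, imp x (imp y z) = imp y (imp x z);
  r0_5 : forall x y z, imp x (join y z) = join (imp x y) (imp x z);
  r0_6 : forall x y, join (imp x y) (imp (imp x y) (join (neg x) y)) = top
}.

Arguments meet {_}. Arguments join {_}. Arguments bot {_}. Arguments top {_}.
Arguments neg {_}. Arguments imp {_}.

Definition fated_filter (L : R0_algebra) (A : L -> Prop) : Prop :=
  (exists a, A a) /\ A top /\
  forall x y a : L, A a -> A (imp a (imp (imp x y) x)) -> A x.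

(* Fuzzy points: x_t in mu, x_t q_k mu, x_t in-or-q_k mu. *)
Definition fin {L : R0_algebra} (mu : L -> R) (x : L) (t : R) : Prop := mu x >= t.
Definition fq (k : R) {L : R0_algebra} (mu : L -> R) (x : L) (t : R) : Prop :=
  mu x + t + k > 1.
Definition fin_or_q (k : R) {L : R0_algebra} (mu : L -> R) (x : L) (t : R) : Prop :=
  fin mu x t \/ fq k mu x t.

Definition fuzzy_fated_filter_k (k : R) (L : R0_algebra) (mu : L -> R) : Prop :=
  (forall x, 0 <= mu x <= 1) /\
  (forall (x : L) (t : R), 0 < t <= 1 -> fin mu x t -> fin_or_q k mu top t) /\
  (forall (x a y : L) (t s : R), 0 < t <= 1 -> 0 < s <= 1 ->
     fin mu (imp a (imp (imp x y) x)) t -> fin mu a s ->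
     fin_or_q k mu x (Rmin t s)).

From Stdlib Require Import Reals Lra Classical.
Open Scope R_scope.

(* On F, a degree
   t > mu x automatically gives the quasi-coincidence mu x + t + k > 1, so
   every point of F is in-or-q_k.  Off F, the fated filter property forces
   a or a -> ((x -> y) -> x) outside F, so min(t, s) <= t2 = mu x. *)

Lemma fin_or_q_of_half_le (k : R) (L : R0_algebra) (mu : L -> R) (x : L) (t : R) :
  (1 - k) / 2 <= mu x -> fin_or_q k mu x t.
Proof.
  intros Hx; unfold fin_or_q, fin, fq.
  destruct (Rle_or_lt t (mu x)); [left | right]; lra.
Qed.

Section TwoValued.

Variables (L : R0_algebra) (F : L -> Prop) (t1 t2 : R) (mu : L -> R).
Hypothesis mu_in : forall x, F x -> mu x = t1.
Hypothesis mu_out : forall x, ~ F x -> mu x = t2.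

Lemma two_valued_bounds (x : L) : t2 <= t1 -> t2 <= mu x <= t1.
Proof.
  intros Ht; destruct (classic (F x)) as [Fx | nFx];
    [rewrite (mu_in x Fx) | rewrite (mu_out x nFx)]; lra.
Qed.

Lemma two_valued_fin_out (z : L) (t : R) : fin mu z t -> ~ F z -> t <= t2.
Proof. unfold fin; intros Hz nFz; rewrite (mu_out z nFz) in Hz; lra. Qed.

Lemma two_valued_fated_min (x a y : L) (t s : R) :
  (forall x y a : L, F a -> F (imp a (imp (imp x y) x)) -> F x) ->
  fin mu (imp a (imp (imp x y) x)) t -> fin mu a s -> ~ F x ->
  Rmin t s <= t2.
Proof.
  intros Hff Hi Ha nFx.
  destruct (classic (F a)) as [Fa | nFa].
  - assert (t <= t2).
    { apply (two_valued_fin_out _ _ Hi); intro Fi; exact (nFx (Hff x y a Fa Fi)). }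
    pose proof (Rmin_l t s); lra.
  - pose proof (two_valued_fin_out _ _ Ha nFa); pose proof (Rmin_r t s); lra.
Qed.

End TwoValued.

Theorem theorem3p18 (L : R0_algebra) (k : R) (F : L -> Prop)
  (t1 t2 : R) (mu : L -> R) :
  0 <= k < 1 ->
  fated_filter L F ->
  (1 - k) / 2 <= t1 <= 1 ->
  0 < t2 < (1 - k) / 2 ->
  (forall x : L, F x -> mu x = t1) ->
  (forall x : L, ~ F x -> mu x = t2) ->
  fuzzy_fated_filter_k k L mu.
Proof.
  intros Hk [_ [Ftop Hff]] Ht1 Ht2 mu_in mu_out.
  assert (Ht21 : t2 <= t1) by lra.
  split; [| split].
  - intro x; pose proof (two_valued_bounds L F t1 t2 mu mu_in mu_out x Ht21); lra.
  - intros x t _ _; apply fin_or_q_of_half_le; rewrite (mu_in _ Ftop); lra.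
  - intros x a y t s _ _ Hi Ha.
    destruct (classic (F x)) as [Fx | nFx].
    + apply fin_or_q_of_half_le; rewrite (mu_in x Fx); lra.
    + left; unfold fin; rewrite (mu_out x nFx).
      pose proof (two_valued_fated_min L F t2 mu mu_out x a y t s Hff Hi Ha nFx); lra.
Qed.
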